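(* In the formal power series ring $\mathbb Q[[u,v,z]]$, $$\sum_{k,l,n\geq 0}\{E_kE_l\}_n\,u^kv^lz^n=\frac{(1+z)(1+uvz)}{(1-uz)(1-vz)}.$$
   Context: For $i\geq1$, $X_i$ is the class function with $X_i(\sigma)$ = number of $i$-cycles of $\sigma$. For a partition $\alpha=1^{a_1}2^{a_2}\cdots$ ($a_i$ = number of parts equal to $i$, $|\alpha|=\sum ia_i$, $l(\alpha)=\sum a_i$) let $\binom X\alpha=\prod_i\binom{X_i}{a_i}$. For $l\geq0$ let $E_l=\sum_{\alpha\vdash l}(-1)^{|\alpha|-l(\alpha)}\binom X\alpha\in\mathbb C[X_1,X_2,\dotsc]$ (the character polynomial of $\bigwedge^l\mathbb C^n$; $E_0=1$). For $p\in\mathbb C[X_1,X_2,\dotsc]$ the signed moment is $\{p\}_n=\frac1{n!}\sum_{\sigma\in S_n}\mathrm{sgn}(\sigma)p(X_1(\sigma),X_2(\sigma),\dotsc)$, $n\geq0$. *)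

From HB Require Import structures.
From mathcomp Require Import all_boot all_order all_algebra all_fingroup.
Set Implicit Arguments. Unset Strict Implicit. Unset Printing Implicit Defensive.
Import Order.TTheory GRing.Theory Num.Theory.
Local Open Scope ring_scope.

Definition cyc_count (n : nat) (s : 'S_n) (i : nat) : nat :=
  #|[set c in porbits s | #|c| == i]|.

(* Character polynomials are represented by their evaluation on the vector
   x = (X_1, X_2, ...) given as a function  x : nat -> nat  (x i = X_i). *)

(* E_l = sum over partitions alpha |- l of (-1)^(|alpha| - l(alpha)) binom(X, alpha).
   A partition alpha = 1^{a_1} 2^{a_2} ... of l is encoded by its multiplicity
   vector a : 'I_l -> 'I_(l.+1), a j = a_{j+1} (number of parts equal to j+1),
   subject to \sum_j (j+1) a_{j+1} = l; this is a bijection with partitions of l. *)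
Definition E (l : nat) (x : nat -> nat) : rat :=
  \sum_(a : {ffun 'I_l -> 'I_l.+1} | (\sum_(j < l) j.+1 * a j == l)%N)
     (-1) ^+ (l - \sum_(j < l) a j)%N *
     \prod_(j < l) ('C(x j.+1, a j))%:R.

Definition smoment (n : nat) (p : (nat -> nat) -> rat) : rat :=
  (n`!%:R)^-1 * \sum_(s : 'S_n) (-1) ^+ odd_perm s * p (cyc_count s).

(* Formal power series in Q[[u,v,z]]: coefficient functions (k,l,n) |-> coeff of u^k v^l z^n. *)
Definition fps := nat -> nat -> nat -> rat.

Definition fps_add (F G : fps) : fps := fun k l n => F k l n + G k l n.
Definition fps_sub (F G : fps) : fps := fun k l n => F k l n - G k l n.
Definition fps_mul (F G : fps) : fps := fun k l n =>
  \sum_(a < k.+1) \sum_(b < l.+1) \sum_(c < n.+1)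
     F a b c * G (k - a)%N (l - b)%N (n - c)%N.
Definition fps_mono (i j m : nat) : fps := fun k l n =>
  if [&& k == i, l == j & n == m] then 1 else 0.
Definition fps_one : fps := fps_mono 0 0 0.
Definition fps_u : fps := fps_mono 1 0 0.
Definition fps_v : fps := fps_mono 0 1 0.
Definition fps_z : fps := fps_mono 0 0 1.

(* Evaluated at a permutation s, E_l is the character of the l-th exterior
   power: expanding prod over the cycles c of s of (1 + (-1)^(|c|-1) t^|c|)
   shows that E_l(s) is the sum, over the s-invariant l-subsets S, of the sign
   of the restriction s|S.  Hence n! {E_k E_l}_n is the sum over |S| = k,
   |S'| = l of sum_(s stabilising S and S') sgn s sgn s|S sgn s|S'.  If
   S :&: S' or the complement of S :|: S' contains two points x, y, right
   multiplication by the transposition (x y) reverses the sign of the summand;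
   otherwise s splits along the four Venn regions and the summand is 1.  The
   surviving pairs (S, S') form S_n-orbits classified by a = |S :&: S'| and
   d = |~: (S :|: S')| in {0, 1}, subject to n + a = k + l + d, and the
   stabilisers along an orbit add up to n!.  So {E_k E_l}_n counts the
   admissible (a, d), which is the coefficient of u^k v^l z^n in
   (1 + z)(1 + uvz) / ((1 - uz)(1 - vz)). *)

From mathcomp Require Import all_boot all_order all_algebra all_fingroup.
From mathcomp Require Import zify ring lra.
From Stdlib Require Import FunctionalExtensionality.
Set Implicit Arguments. Unset Strict Implicit. Unset Printing Implicit Defensive.
Import Order.TTheory GRing.Theory Num.Theory.
Local Open Scope ring_scope.

Section CongruenceModXn.
Variables (R : comNzRingType) (m : nat).

Definition eq_modXn (p q : {poly R}) := exists r, p = q + r * 'X^m.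

Lemma eq_modXn_refl p : eq_modXn p p.
Proof. by exists 0; rewrite mul0r addr0. Qed.

Lemma eq_modXnD p1 q1 p2 q2 :
  eq_modXn p1 q1 -> eq_modXn p2 q2 -> eq_modXn (p1 + p2) (q1 + q2).
Proof. by move=> [r1 ->] [r2 ->]; exists (r1 + r2); ring. Qed.

Lemma eq_modXnM p1 q1 p2 q2 :
  eq_modXn p1 q1 -> eq_modXn p2 q2 -> eq_modXn (p1 * p2) (q1 * q2).
Proof.
by move=> [r1 ->] [r2 ->]; exists (r1 * q2 + q1 * r2 + r1 * r2 * 'X^m); ring.
Qed.

Lemma eq_modXn_sum (I : Type) (r : seq I) (P : pred I) (F G : I -> {poly R}) :
  (forall i, P i -> eq_modXn (F i) (G i)) ->
  eq_modXn (\sum_(i <- r | P i) F i) (\sum_(i <- r | P i) G i).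
Proof. by move=> FG; apply: (big_ind2 eq_modXn (eq_modXn_refl 0) eq_modXnD). Qed.

Lemma eq_modXn_prod (I : Type) (r : seq I) (P : pred I) (F G : I -> {poly R}) :
  (forall i, P i -> eq_modXn (F i) (G i)) ->
  eq_modXn (\prod_(i <- r | P i) F i) (\prod_(i <- r | P i) G i).
Proof. by move=> FG; apply: (big_ind2 eq_modXn (eq_modXn_refl 1) eq_modXnM). Qed.

Lemma eq_modXn_coef p q i : (i < m)%N -> eq_modXn p q -> p`_i = q`_i.
Proof. by move=> im [r ->]; rewrite coefD coefMXn im addr0. Qed.

Lemma eq_modXn_mulXn c e : (m <= e)%N -> eq_modXn (c * 'X^e) 0.
Proof.
by move=> me; exists (c * 'X^(e - m)); rewrite add0r -mulrA -exprD subnK.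
Qed.

End CongruenceModXn.

(* The sign of an (i+1)-cycle times t^(i+1). *)
Definition cycle_term (i : nat) : {poly rat} := ((-1) ^+ i)%:P * 'X^(i.+1).

Definition cycle_binom (m i a : nat) : {poly rat} :=
  ('C(m, a)%:R * (-1) ^+ (i * a))%:P * 'X^(i.+1 * a).

Lemma exp_cycle_term m i : (1 + cycle_term i) ^+ m = \sum_(a < m.+1) cycle_binom m i a.
Proof.
rewrite addrC exprD1n; apply: eq_bigr => a _.
rewrite /cycle_term /cycle_binom exprMn -rmorphXn /= -!exprM rmorphM /= -mulr_natl.
by rewrite polyC_natr mulrA mulnC.
Qed.

Lemma exp_cycle_term_modXn k m i : eq_modXn k.+1 ((1 + cycle_term i) ^+ m)
  (if (i < k)%N then \sum_(a < k.+1) cycle_binom m i a else 1).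
Proof.
case: ifP => ik; last first.
  have cycle_term_0 : eq_modXn k.+1 (1 + cycle_term i) 1.
    rewrite -[X in eq_modXn _ _ X]addr0; apply: eq_modXnD; first exact: eq_modXn_refl.
    by rewrite /cycle_term; apply: eq_modXn_mulXn; lia.
  elim: m => [|m IHm]; first exact: eq_modXn_refl.
  by rewrite exprS -[X in eq_modXn _ _ X]mulr1; apply: eq_modXnM.
rewrite exp_cycle_term.
rewrite (big_ord_widen (m + k).+1 (cycle_binom m i)) ?ltnS ?leq_addr //.
rewrite (big_ord_widen (m + k).+1 (cycle_binom m i)) ?ltnS ?leq_addl //.
rewrite big_mkcond [X in eq_modXn _ _ X]big_mkcond; apply: eq_modXn_sum => a _.
have binom_0 : (m < a)%N -> cycle_binom m i a = 0.
  by move=> ma; rewrite /cycle_binom bin_small ?mul0r.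
have [ma|am] := ltnP m a; first by rewrite binom_0 // !if_same; exact: eq_modXn_refl.
rewrite ltnS am; case: ifP => ak; first exact: eq_modXn_refl.
by apply: eq_modXn_mulXn; nia.
Qed.

Lemma E_coef_prod x k N : (k <= N)%N ->
  E k x = (\prod_(i < N) (1 + cycle_term i) ^+ x i.+1)`_k.
Proof.
move=> kN; rewrite (eq_modXn_coef (ltnSn k) (eq_modXn_prod _
  (fun (i : 'I_N) _ => exp_cycle_term_modXn k (x i.+1) i))).
rewrite -big_mkcond /= -(big_ord_widen N (fun i => \sum_(a < k.+1) cycle_binom (x i.+1) i a) kN).
rewrite bigA_distr_bigA coef_sum /E big_mkcond /=; apply: eq_bigr => f _.
have -> : \prod_(i < k) cycle_binom (x i.+1) i (f i) =
    (\prod_(i < k) ('C(x i.+1, f i)%:R * (-1) ^+ (i * f i)))%:P *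
    'X^(\sum_(i < k) i.+1 * f i).
  by rewrite big_split /= -rmorph_prod prodrXr.
rewrite coefCM coefXn eq_sym.
case: eqP => [sumf|]; last by rewrite mulr0.
rewrite mulr1 big_split /= prodrXr mulrC; congr (_ * (-1) ^+ _).
rewrite {1}sumf; have -> : (\sum_(i < k) i.+1 * f i = \sum_(i < k) i * f i + \sum_(i < k) f i)%N.
  by rewrite -big_split; apply: eq_bigr => i _; rewrite mulSn addnC.
by rewrite addnK.
Qed.

Lemma prod1D_powerset (T : finType) (R : comNzRingType) (A : {set T}) (w : T -> R) :
  \prod_(i in A) (1 + w i) = \sum_(B in powerset A) \prod_(i in B) w i.
Proof.
pose h (i : T) (b : bool) : R := if b then (if i \in A then w i else 0) else 1.
transitivity (\prod_(i : T) \sum_(b : bool) h i b).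
  rewrite big_mkcond /=; apply: eq_bigr => i _; rewrite big_bool /h.
  by case: (i \in A); [exact: addrC | exact: (esym (add0r _))].
rewrite bigA_distr_bigA /= (reindex (fun B : {set T} => [ffun i => i \in B])) /=; last first.
  exists (fun f : {ffun T -> bool} => [set i | f i]) => [B _ | f _].
    by apply/setP => i; rewrite inE ffunE.
  by apply/ffunP => i; rewrite ffunE inE.
rewrite [RHS]big_mkcond /=; apply: eq_bigr => B _; rewrite powersetE.
transitivity (\prod_(i in B) (if i \in A then w i else 0)).
  by rewrite [RHS]big_mkcond /=; apply: eq_bigr => i _; rewrite ffunE /h.
case: ifP => [/subsetP BA | /negbT/subsetPn [i iB iA]].
  by apply: eq_bigr => i /BA ->.
by rewrite (bigD1 i) //= (negbTE iA) mul0r.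
Qed.

Section InvariantSets.
Variable T : finType.
Implicit Types (s : {perm T}) (S : {set T}) (U : {set {set T}}).

Lemma astabs_permP s S : reflect (forall x, (s x \in S) = (x \in S)) (s \in 'N(S | 'P)%g).
Proof. by apply: (iffP astabsP) => sS x; have := sS x; rewrite /= apermE. Qed.

Lemma astabs_perm s S x : (s \in 'N(S | 'P)%g) -> (s x \in S) = (x \in S).
Proof. by move/astabs_permP. Qed.

Lemma astabs_expg s S x i : (s \in 'N(S | 'P)%g) -> x \in S -> (s ^+ i)%g x \in S.
Proof.
by move=> sS xS; rewrite -[_ x]/(aperm x (s ^+ i)%g) (astabs_act _ (groupX i sS)).
Qed.

Lemma porbits_porbit s c x : c \in porbits s -> x \in c -> c = porbit s x.
Proof. by move=> /imsetP [y _ ->] xy; apply/esym/eqP; rewrite eq_porbit_mem. Qed.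

Lemma card_porbits_gt0 s c : c \in porbits s -> (0 < #|c|)%N.
Proof. by move=> /imsetP [y _ ->]; rewrite lt0n card_porbit_neq0. Qed.

Lemma card_cover_porbits s U :
  U \subset porbits s -> #|cover U| = (\sum_(c in U) #|c|)%N.
Proof.
move=> /subsetP Us; apply/eqP; rewrite (eq_leqif (leq_card_cover U)).
apply/trivIsetP => A B /Us As /Us Bs; apply: contraR => /pred0Pn [x /andP [xA xB]].
by rewrite (porbits_porbit As xA) (porbits_porbit Bs xB).
Qed.

Lemma prod_porbits (R : comNzRingType) (f : nat -> R) s N : (#|T| <= N)%N ->
  \prod_(c in porbits s) f #|c|.-1 =
  \prod_(i < N) f i ^+ #|[set c in porbits s | #|c| == i.+1]|.
Proof.
move=> TN; transitivity (\prod_(i < N) \prod_(c in porbits s | #|c| == i.+1) f i); last first.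
  by apply: eq_bigr => i _; rewrite -prodr_const; apply: eq_bigl => c; rewrite inE.
under [RHS]eq_bigr do rewrite big_mkcondr /=.
rewrite exchange_big /=; apply: eq_bigr => c cs.
have c_gt0 := card_porbits_gt0 cs.
have cN : (#|c|.-1 < N)%N by rewrite prednK // (leq_trans (max_card c)).
rewrite -big_mkcond /= (big_pred1 (Ordinal cN)) // => i.
by apply/eqP/eqP => [ci | ->]; [apply: val_inj; rewrite /= ci | rewrite /= prednK].
Qed.

Lemma astabs_cover_porbits s U : U \subset porbits s -> (s \in 'N(cover U | 'P)%g).
Proof.
move=> /subsetP Us; apply/astabs_permP => x.
have sx_orbit y : (s x \in porbit s y) = (x \in porbit s y).
  by rewrite -!eq_porbit_mem -[s x]/((s ^+ 1)%g x) porbit_perm.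
by apply/bigcupP/bigcupP => -[c cU xc]; exists c => //;
  move: xc; have /imsetP [y _ ->] := Us c cU; rewrite sx_orbit.
Qed.

Lemma porbit_restr_perm_in s S x : (s \in 'N(S | 'P)%g) -> x \in S ->
  porbit (restr_perm S s) x = porbit s x.
Proof.
move=> sS xS; have restr_expg i : ((restr_perm S s) ^+ i)%g x = (s ^+ i)%g x.
  elim: i => [|i IHi]; first by rewrite !expg0 !perm1.
  by rewrite !expgSr !permM IHi restr_permE // astabs_expg.
by apply/setP => y; apply/porbitP/porbitP => -[i ->]; exists i; rewrite restr_expg.
Qed.

Lemma porbit_restr_perm_out s S x : x \notin S -> porbit (restr_perm S s) x = [set x].
Proof.
move=> xS; have restr_expg i : ((restr_perm S s) ^+ i)%g x = x.
  elim: i => [|i IHi]; first by rewrite expg0 perm1.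
  by rewrite expgSr permM IHi (out_perm (restr_perm_on S s)).
apply/setP => y; rewrite inE; apply/porbitP/eqP => [[i ->] | ->]; first exact: restr_expg.
by exists 0; rewrite expg0 perm1.
Qed.

Lemma porbits_restr_perm s U : U \subset porbits s ->
  porbits (restr_perm (cover U) s) = U :|: [set [set x] | x in ~: cover U].
Proof.
move=> Us; have sU := astabs_cover_porbits Us.
have cover_porbit x : x \in cover U -> porbit s x \in U.
  by move=> /bigcupP [c cU xc]; rewrite -(porbits_porbit (subsetP Us _ cU) xc).
apply/setP => c; rewrite inE; apply/imsetP/orP => [[x _ ->] | [cU | /imsetP [x xU ->]]].
- case: (boolP (x \in cover U)) => xU; first by left; rewrite porbit_restr_perm_in ?cover_porbit.
  by right; rewrite porbit_restr_perm_out //; apply: imset_f; rewrite inE.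
- have /card_gt0P [x xc] := card_porbits_gt0 (subsetP Us _ cU).
  have xU : x \in cover U by apply/bigcupP; exists c.
  by exists x => //; rewrite porbit_restr_perm_in // -(porbits_porbit (subsetP Us _ cU) xc).
- by exists x => //; rewrite porbit_restr_perm_out //; move: xU; rewrite inE.
Qed.

Lemma odd_restr_perm_cover s U : U \subset porbits s ->
  odd_perm (restr_perm (cover U) s) = odd (#|cover U| - #|U|).
Proof.
move=> Us; rewrite /odd_perm porbits_restr_perm // cardsU.
have -> : U :&: [set [set x] | x in ~: cover U] = set0.
  apply/setP => c; rewrite !inE; apply/andP => -[cU /imsetP [x]].
  by rewrite inE => /negP xU c_x; apply: xU; apply/bigcupP; exists c; rewrite // c_x inE.
rewrite cards0 subn0 card_imset; last exact: set1_inj.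
have UcU : (#|U| <= #|cover U|)%N.
  by rewrite (card_cover_porbits Us) -sum1_card leq_sum // => c /(subsetP Us)/card_porbits_gt0.
have := cardsC (cover U); move: UcU; move: #|cover U| #|~: cover U| #|U| => m m' u mu <-.
rewrite -oddD (_ : (_ + _)%N = m - u + (m' + u).*2)%N; first by rewrite oddD odd_double addbF.
by rewrite -addnn; lia.
Qed.

Lemma cover_porbits_sub s S : (s \in 'N(S | 'P)%g) ->
  cover [set c in porbits s | c \subset S] = S.
Proof.
move=> sS; apply/setP => x; apply/bigcupP/idP => [[c] | xS].
  by rewrite inE => /andP [_ /subsetP cS] /cS.
exists (porbit s x); last exact: porbit_id.
by rewrite inE imset_f //=; apply/subsetP => y /porbitP [i ->]; exact: astabs_expg.
Qed.

Lemma porbits_sub_cover s U :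
  ([set c in porbits s | c \subset cover U] == U) = (U \subset porbits s).
Proof.
apply/eqP/idP => [<- | Us]; first by apply/subsetP => c; rewrite inE => /andP [].
apply/setP => c; rewrite inE; apply/andP/idP => [[cs /subsetP cU] | cU]; last first.
  by split; [exact: (subsetP Us) | exact: bigcup_sup].
have /card_gt0P [x xc] := card_porbits_gt0 cs.
have /bigcupP [c' c'U xc'] := cU x xc.
by rewrite (porbits_porbit cs xc) -(porbits_porbit (subsetP Us _ c'U) xc').
Qed.

End InvariantSets.

Lemma E_cyc_count n (s : 'S_n) k : E k (cyc_count s) =
  \sum_(S | (s \in 'N(S | 'P)%g) && (#|S| == k)) (-1) ^+ odd_perm (restr_perm S s).
Proof.
rewrite (@E_coef_prod _ k (n + k)) ?leq_addl //.
rewrite -(@prod_porbits _ _ (fun i => 1 + cycle_term i)) ?card_ord ?leq_addr //.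
rewrite prod1D_powerset coef_sum.
rewrite (reindex_onto (fun U => cover U) (fun S => [set c in porbits s | c \subset S])) /=;
  last by move=> S /andP [sS _]; apply: cover_porbits_sub.
rewrite [LHS]big_mkcond [RHS]big_mkcond; apply: eq_bigr => U _.
rewrite porbits_sub_cover powersetE.
case: (boolP (U \subset porbits s)) => Us; last by rewrite andbF.
rewrite andbT astabs_cover_porbits //= odd_restr_perm_cover // signr_odd.
have c_gt0 c : c \in U -> (0 < #|c|)%N by move/(subsetP Us)/card_porbits_gt0.
have -> : \prod_(c in U) cycle_term #|c|.-1 =
    ((-1) ^+ (#|cover U| - #|U|))%:P * 'X^#|cover U|.
  rewrite /cycle_term big_split /= -rmorph_prod !prodrXr (card_cover_porbits Us).
  have sum_pred : (\sum_(c in U) #|c|.-1 + #|U| = \sum_(c in U) #|c|)%N.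
    by rewrite -sum1_card -big_split /=; apply: eq_bigr => c /c_gt0 /prednK {2}<-; exact: addn1.
  by rewrite -{1}sum_pred addnK (eq_bigr _ (fun c cU => prednK (c_gt0 c cU))).
by rewrite coefCM coefXn eq_sym; case: eqP; rewrite ?mulr1 ?mulr0.
Qed.

Lemma sum_sign_reversing (gT : finGroupType) (P : pred gT) (f : gT -> rat) t :
  (forall g, P (g * t)%g = P g) -> (forall g, P g -> f (g * t)%g = - f g) ->
  \sum_(g | P g) f g = 0.
Proof.
move=> Pt ft; have : \sum_(g | P g) f g = - \sum_(g | P g) f g.
  rewrite {1}(reindex_inj (mulIg t)) /= -sumrN.
  by apply: eq_big => g; [exact: Pt | rewrite Pt; exact: ft].
lra.
Qed.

Section TwistedSign.
Variable T : finType.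
Implicit Types (s : {perm T}) (S X Y : {set T}).

Lemma astabsI_perm s X Y : (s \in 'N(X | 'P)%g) -> (s \in 'N(Y | 'P)%g) ->
  (s \in 'N(X :&: Y | 'P)%g).
Proof. by move=> sX sY; apply: (subsetP (astabsI _ X Y)); rewrite inE sX sY. Qed.

Lemma astabsD_perm s X Y : (s \in 'N(X | 'P)%g) -> (s \in 'N(Y | 'P)%g) ->
  (s \in 'N(X :\: Y | 'P)%g).
Proof. by move=> sX sY; apply: (subsetP (astabsD _ X Y)); rewrite inE sX sY. Qed.

Lemma restr_perm_out s X x : x \notin X -> restr_perm X s x = x.
Proof. exact: out_perm (restr_perm_on X s). Qed.

Lemma restr_permID s X Y : (s \in 'N(X | 'P)%g) -> (s \in 'N(Y | 'P)%g) ->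
  restr_perm X s = (restr_perm (X :&: Y) s * restr_perm (X :\: Y) s)%g.
Proof.
move=> sX sY; have sI := astabsI_perm sX sY; have sD := astabsD_perm sX sY.
apply/permP => x; rewrite permM.
case: (boolP (x \in X)) => xX; last by rewrite !restr_perm_out // !inE (negbTE xX) ?andbF.
case: (boolP (x \in Y)) => xY.
  have xI : x \in X :&: Y by rewrite inE xX xY.
  have sxI : s x \in X :&: Y by rewrite (astabs_perm _ sI).
  rewrite (restr_permE sX xX) (restr_permE sI xI) restr_perm_out //.
  by move: sxI; rewrite !inE => /andP [-> ->].
have xD : x \in X :\: Y by rewrite !inE xX xY.
rewrite (@restr_perm_out s (X :&: Y) x) ?inE ?(negbTE xY) ?andbF //.
by rewrite (restr_permE sX xX) (restr_permE sD xD).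
Qed.

Lemma odd_restr_permID s X Y : (s \in 'N(X | 'P)%g) -> (s \in 'N(Y | 'P)%g) ->
  odd_perm (restr_perm X s) =
  odd_perm (restr_perm (X :&: Y) s) (+) odd_perm (restr_perm (X :\: Y) s).
Proof. by move=> sX sY; rewrite (restr_permID sX sY) odd_permM. Qed.

Lemma astabs_perm_setT s : (s \in 'N([set: T] | 'P)%g).
Proof. by apply/astabs_permP => y; rewrite !inE. Qed.

Lemma restr_perm_setT s : restr_perm [set: T] s = s.
Proof. by apply/permP => x; rewrite restr_permE ?astabs_perm_setT ?inE. Qed.

Lemma restr_perm_small s X : (s \in 'N(X | 'P)%g) -> (#|X| <= 1)%N -> restr_perm X s = 1%g.
Proof.
move=> sX /card_le1_eqP X_small; apply/permP => x; rewrite perm1.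
case: (boolP (x \in X)) => xX; last exact: restr_perm_out.
by rewrite restr_permE //; apply: (X_small x (s x) xX); rewrite (astabs_perm _ sX).
Qed.

Definition twisted_sign S S' s : rat :=
  (-1) ^+ odd_perm s * (-1) ^+ odd_perm (restr_perm S s) * (-1) ^+ odd_perm (restr_perm S' s).

Lemma twisted_sign_small S S' s : (s \in 'N(S | 'P)%g) -> (s \in 'N(S' | 'P)%g) ->
  (#|S :&: S'| <= 1)%N -> (#|~: (S :|: S')| <= 1)%N -> twisted_sign S S' s = 1.
Proof.
move=> sS sS' smallI smallC.
have sT := astabs_perm_setT s.
have sSc : (s \in 'N(~: S | 'P)%g) by rewrite astabsC.
have oddI : odd_perm (restr_perm (S :&: S') s) = false.
  by rewrite restr_perm_small ?odd_perm1 ?astabsI_perm.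
have oddC : odd_perm (restr_perm (~: S :\: S') s) = false.
  by rewrite restr_perm_small ?odd_perm1 ?astabsD_perm // setDE -setCU.
rewrite /twisted_sign -!signr_addb -[in odd_perm s](restr_perm_setT s).
rewrite (odd_restr_permID sT sS) setTI setTD (odd_restr_permID sS sS').
rewrite (odd_restr_permID sSc sS') (odd_restr_permID sS' sS) (setIC S' S) oddI oddC.
rewrite (_ : S' :\: S = ~: S :&: S'); last by rewrite setDE setIC.
by case: (odd_perm (restr_perm (S :\: S') s)); case: (odd_perm (restr_perm (~: S :&: S') s)).
Qed.

Lemma astabs_tperm S x y : (x \in S) = (y \in S) -> (tperm x y \in 'N(S | 'P)%g).
Proof. by move=> xyS; apply/astabs_permP => z; case: tpermP => [->|->|]. Qed.

Lemma restr_perm_tperm S x y : (x \in S) = (y \in S) ->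
  restr_perm S (tperm x y) = if x \in S then tperm x y else 1%g.
Proof.
move=> xyS; apply/permP => z; case: (boolP (z \in S)) => zS.
  rewrite restr_permE ?astabs_tperm //; case: ifP => // xS; rewrite perm1 tpermD //.
    by apply/eqP => xz; move: xS; rewrite xz zS.
  by apply/eqP => yz; move: xS; rewrite xyS yz zS.
rewrite restr_perm_out //; case: ifP => xS; last by rewrite perm1.
by rewrite tpermD //; apply/eqP => xz; move: zS; rewrite -xz -?xyS xS.
Qed.

Lemma odd_restr_perm_mul_tperm S s x y : (s \in 'N(S | 'P)%g) -> (x \in S) = (y \in S) ->
  odd_perm (restr_perm S (s * tperm x y)%g) =
  odd_perm (restr_perm S s) (+) ((x \in S) && (x != y)).
Proof.
move=> sS xyS; rewrite morphM //= ?astabs_tperm // odd_permM restr_perm_tperm //.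
by case: (x \in S); rewrite ?odd_tperm ?odd_perm1.
Qed.

(* Multiplying by a transposition inside S :&: S' or outside S :|: S' flips
   the sign of s but neither or both of the restricted signs. *)
Lemma twisted_sign_mul_tperm S S' s x y : x != y ->
  (s \in 'N(S | 'P)%g) -> (s \in 'N(S' | 'P)%g) ->
  (x \in S) = (y \in S) -> (x \in S') = (y \in S') -> (x \in S) = (x \in S') ->
  twisted_sign S S' (s * tperm x y)%g = - twisted_sign S S' s.
Proof.
move=> xy sS sS' xyS xyS' xSS'.
rewrite /twisted_sign !odd_restr_perm_mul_tperm // odd_permM odd_tperm xy -xSS' !andbT.
rewrite -!signr_addb -signrN; apply: congr1.
have addb_flip a b c t : a (+) true (+) (b (+) t) (+) (c (+) t) = ~~ (a (+) b (+) c).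
  by case: a; case: b; case: c; case: t.
by rewrite addb_flip.
Qed.

Definition twisted_sum S S' : rat :=
  \sum_(s | (s \in 'N(S | 'P)%g) && (s \in 'N(S' | 'P)%g)) twisted_sign S S' s.

Lemma twisted_sumE S S' : twisted_sum S S' =
  if (#|S :&: S'| <= 1)%N && (#|~: (S :|: S')| <= 1)%N
  then #|('N(S | 'P) :&: 'N(S' | 'P))%g|%:R else 0.
Proof.
rewrite /twisted_sum; case: ifP => [/andP [smallI smallC] | /negbT].
  rewrite -sumr_const; apply: eq_big => [s | s /andP [sS sS']]; first by rewrite in_setI.
  exact: twisted_sign_small.
rewrite negb_and -!ltnNge => large.
have [x [y [xy xyS xyS' xSS']]] : exists x y, [/\ x != y, (x \in S) = (y \in S),
    (x \in S') = (y \in S') & (x \in S) = (x \in S')].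
  case/orP: large => /card_gt1P [x [y [xA yA xy]]]; exists x, y; move: xA yA.
    by rewrite !inE => /andP [-> ->] /andP [-> ->].
  by rewrite !inE !negb_or => /andP [/negbTE -> /negbTE ->] /andP [/negbTE -> /negbTE ->].
apply: (sum_sign_reversing (t := tperm x y)) => [s | s /andP [sS sS']].
  by rewrite !groupMr // ?astabs_tperm.
exact: twisted_sign_mul_tperm.
Qed.

End TwistedSign.

Lemma sum_sign_E2 n k l :
  \sum_(s : 'S_n) (-1) ^+ odd_perm s * (E k (cyc_count s) * E l (cyc_count s)) =
  \sum_(S : {set 'I_n} | #|S| == k) \sum_(S' : {set 'I_n} | #|S'| == l) twisted_sum S S'.
Proof.
have E_ind m (s : 'S_n) : E m (cyc_count s) = \sum_(S : {set 'I_n} | #|S| == m)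
    ((s \in 'N(S | 'P)%g))%:R * (-1) ^+ odd_perm (restr_perm S s).
  rewrite E_cyc_count [LHS]big_mkcond [RHS]big_mkcond; apply: eq_bigr => S _.
  by case: (s \in _); case: (#|S| == m); rewrite ?mul1r ?mul0r.
under eq_bigr do rewrite !E_ind mulr_suml mulr_sumr; rewrite exchange_big.
apply: eq_bigr => S _; under eq_bigr do rewrite !mulr_sumr; rewrite exchange_big.
apply: eq_bigr => S' _; rewrite /twisted_sum [RHS]big_mkcond; apply: eq_bigr => s _.
rewrite /twisted_sign; case: (s \in _); case: (s \in _); rewrite /= ?mul1r ?mul0r ?mulr0 //.
by rewrite !mulrA.
Qed.

(* Induction on the number of points where the two colourings differ: a
   transposition repairs one of them without creating new ones. *)
Lemma perm_of_eq_fibers (T : finType) (K : eqType) (f g : T -> K) :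
  (forall c, #|[set x | g x == c]| = #|[set x | f x == c]|) ->
  exists p : {perm T}, forall x, g (p x) = f x.
Proof.
have [m] := ubnP #|[set x | g x != f x]|; elim: m g => [|m IHm] g; first by rewrite ltn0.
move=> diff_m fibers; case: (boolP [exists x, g x != f x]) => [/existsP [x gfx] | /existsPn gf];
  last by exists 1%g => x; rewrite perm1; apply/eqP; move: (gf x); rewrite negbK.
have [y /andP [gy fy]] : exists y, (g y == f x) && (f y != f x).
  apply/existsP; apply: contraT => /existsPn none.
  have fiber_sub : [set y | g y == f x] \subset [set y | f y == f x] :\ x.
    apply/subsetP => y; rewrite !inE => gyx; have := none y; rewrite gyx /= negbK => ->.
    by rewrite andbT; apply: contraNneq gfx => yx; move: gyx; rewrite yx.
  have := subset_leq_card fiber_sub.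
  by rewrite fibers (cardsD1 x [set y | f y == f x]) inE eqxx add1n ltnn.
pose t := tperm x y.
have diff_t : (#|[set z | g (t z) != f z]| < m)%N.
  rewrite (cardsD1 x) inE gfx add1n ltnS in diff_m; apply: leq_ltn_trans diff_m.
  apply/subset_leq_card/subsetP => z; rewrite !inE /t.
  case: tpermP => [-> | -> | /eqP zx /eqP zy]; first by rewrite (eqP gy) eqxx.
    by rewrite (eqP gy) [f x == _]eq_sym fy andbT => _; apply: contraNneq fy => ->.
  by move=> ->; rewrite andbT.
have fibers_t c : #|[set z | g (t z) == c]| = #|[set z | f z == c]|.
  rewrite -fibers -(card_preimset [set z | g z == c] (@perm_inj _ t)).
  by apply: eq_card => z; rewrite !inE.
have [p gp] := IHm (fun z => g (t z)) diff_t fibers_t.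
by exists (p * t)%g => z; rewrite permM.
Qed.

Section PairAction.
Variable T : finType.
Local Notation pairT := ({set T} * {set T})%type.

Definition pair_act (x : pairT) (p : {perm T}) : pairT := (p @: x.1, p @: x.2).

Lemma pair_act1 : pair_act^~ 1%g =1 id.
Proof. by case=> S S'; rewrite /pair_act /= !(eq_imset _ (@perm1 _)) !imset_id. Qed.

Lemma pair_actM x : act_morph pair_act x.
Proof.
by case: x => S S' p q; rewrite /pair_act /= -!imset_comp; congr (_, _);
  apply: eq_imset => z; rewrite /= permM.
Qed.

Canonical pair_action := TotalAction pair_act1 pair_actM.

Lemma imset_perm_id (p : {perm T}) (S : {set T}) : (p @: S == S) = (p \in 'N(S | 'P)%g).
Proof.
apply/eqP/astabs_permP => [pS z | pS].
  by rewrite -{1}pS mem_imset //; exact: perm_inj.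
apply/eqP; rewrite eqEcard card_imset ?leqnn ?andbT; last exact: perm_inj.
by apply/subsetP => w /imsetP [z zS ->]; rewrite pS.
Qed.

Lemma astab1_pair (S S' : {set T}) :
  ('C_[set: {perm T}][(S, S') | pair_action])%g = ('N(S | 'P) :&: 'N(S' | 'P))%g.
Proof.
rewrite setTI; apply/setP => p; rewrite [RHS]in_setI -!imset_perm_id.
apply/astab1P/andP => [[pS pS'] | [/eqP pS /eqP pS']].
  by rewrite pS pS' !eqxx.
by rewrite /= /pair_act /= pS pS'.
Qed.

Lemma card_stab_orbit (x0 : pairT) :
  (\sum_(x in orbit pair_action [set: {perm T}] x0)
     #|('C_[set: {perm T}][x | pair_action])%g|)%N = #|[set: {perm T}]|.
Proof.
set O := orbit _ _ x0.
have O_gt0 : (0 < #|O|)%N by apply/card_gt0P; exists x0; exact: orbit_refl.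
have stab x : x \in O -> #|('C_[set: {perm T}][x | pair_action])%g| =
    (#|[set: {perm T}]| %/ #|O|)%N.
  by move=> xO; rewrite -(card_orbit_stab pair_action [set: {perm T}] x) (orbit_eqP xO) mulKn.
by rewrite (eq_bigr _ stab) sum_nat_const mulnC divnK // dvdn_orbit.
Qed.

End PairAction.

Arguments pair_action {T}.

Lemma subset_of_card (T : finType) (A : {set T}) m :
  (m <= #|A|)%N -> exists2 B : {set T}, B \subset A & #|B| = m.
Proof.
rewrite -bin_gt0 -cards_draws => /card_gt0P [B].
by rewrite inE => /andP [BA /eqP]; exists B.
Qed.

Lemma card_venn_fiber (T : finType) (S S' : {set T}) c :
  #|[set z | (z \in S, z \in S') == c]| =
  match c with
  | (true, true) => #|S :&: S'|
  | (true, false) => #|S| - #|S :&: S'|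
  | (false, true) => #|S'| - #|S :&: S'|
  | (false, false) => #|~: (S :|: S')|
  end%N.
Proof.
case: c => [[] []]; [| rewrite -cardsD | rewrite setIC -cardsD |];
  by apply: eq_card => z; rewrite !inE xpair_eqE; case: (z \in S); case: (z \in S').
Qed.

Section VennClasses.
Variable n : nat.
Local Notation pairT := ({set 'I_n} * {set 'I_n})%type.

Definition venn_class (k l a d : nat) : {set pairT} :=
  [set x : pairT | [&& #|x.1| == k, #|x.2| == l,
                       #|x.1 :&: x.2| == a & #|~: (x.1 :|: x.2)| == d]].

Lemma cardsC_ord (X : {set 'I_n}) : #|~: X| = (n - #|X|)%N.
Proof. by rewrite cardsCs setCK card_ord. Qed.

Lemma venn_class_orbit k l a d x0 : x0 \in venn_class k l a d ->
  venn_class k l a d = orbit pair_action [set: 'S_n] x0.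
Proof.
case: x0 => S0 S0'; rewrite inE /= => /and4P [/eqP k0 /eqP l0 /eqP a0 /eqP d0].
apply/setP => -[S S']; apply/idP/idP => [| /orbitP [p _ <-]]; last first.
  have p_inj : injective p := @perm_inj _ p.
  rewrite !inE /= /pair_act /= -imsetU -imsetI; last by move=> ? ? _ _; exact: p_inj.
  by rewrite !cardsC_ord !card_imset // -cardsC_ord k0 l0 a0 d0 !eqxx.
rewrite inE /= => /and4P [/eqP k1 /eqP l1 /eqP a1 /eqP d1].
have fibers c : #|[set z | (z \in S, z \in S') == c]| = #|[set z | (z \in S0, z \in S0') == c]|.
  by rewrite !card_venn_fiber k0 l0 a0 d0 k1 l1 a1 d1.
have [p venn_p] := perm_of_eq_fibers fibers.
apply/orbitP; exists p; rewrite ?inE //= /pair_act /=.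
have inS z : p z \in S = (z \in S0) by case: (venn_p z).
have inS' z : p z \in S' = (z \in S0') by case: (venn_p z).
by congr (_, _); apply/setP => w;
  rewrite -[w](permKV p) (mem_imset _ _ (@perm_inj _ p)) ?inS ?inS'.
Qed.

Definition venn_admissible (k l a d : nat) : bool :=
  [&& a <= k, a <= l & n + a == k + l + d]%N.

Lemma venn_class_admissible k l a d x :
  x \in venn_class k l a d -> venn_admissible k l a d.
Proof.
case: x => S S'; rewrite inE /= => /and4P [/eqP <- /eqP <- /eqP <- /eqP <-].
have := subset_leq_card (subsetIl S S'); have := subset_leq_card (subsetIr S S').
have := cardsUI S S'; rewrite cardsC_ord; have := max_card (S :|: S'); rewrite card_ord.
move: #|S| #|S'| #|S :&: S'| #|S :|: S'| => u v w z uvw.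
by rewrite /venn_admissible; lia.
Qed.

Lemma venn_class_witness k l a d :
  venn_admissible k l a d -> exists x, x \in venn_class k l a d.
Proof.
move=> /and3P [ak al /eqP nd].
have [S _ kS] : exists2 S : {set 'I_n}, S \subset setT & #|S| = k.
  by apply: subset_of_card; rewrite cardsT card_ord; lia.
have [A AS aA] : exists2 A : {set 'I_n}, A \subset S & #|A| = a.
  by apply: subset_of_card; rewrite kS.
have [C CS lC] : exists2 C : {set 'I_n}, C \subset ~: S & #|C| = (l - a)%N.
  by apply: subset_of_card; rewrite cardsC_ord kS; lia.
have SC0 : S :&: C = set0.
  by apply/setP => z; rewrite !inE; apply/negbTE/andP => -[zS /(subsetP CS)]; rewrite inE zS.
have AC0 : A :&: C = set0 by apply/eqP; rewrite -subset0 -SC0 setSI.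
exists (S, A :|: C); rewrite inE /= setIUr SC0 setU0 (setIidPr AS) setUA (setUidPl AS).
rewrite cardsC_ord !cardsU SC0 AC0 cards0 !subn0 kS aA lC.
by apply/and4P; split; apply/eqP; lia.
Qed.

Lemma sum_stab_venn_class k l a d :
  (\sum_(x in venn_class k l a d) #|('C_[set: 'S_n][x | pair_action])%g|)%N =
  if venn_admissible k l a d then n`! else 0%N.
Proof.
have [V0 | [x0 x0V]] := set_0Vmem (venn_class k l a d).
  by rewrite V0 big_set0; case: ifP => // /venn_class_witness [x]; rewrite V0 inE.
by rewrite (venn_class_admissible x0V) (venn_class_orbit x0V) card_stab_orbit cardsT card_Sn.
Qed.

End VennClasses.

(* (a, d) ranges over the possible sizes of S :&: S' and ~: (S :|: S'). *)
Definition class_count (k l n : nat) : nat :=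
  \sum_(a < 2) \sum_(d < 2) venn_admissible n k l a d.

Lemma sum_twisted_sum n k l :
  \sum_(S : {set 'I_n} | #|S| == k) \sum_(S' : {set 'I_n} | #|S'| == l) twisted_sum S S' =
  (n`! * class_count k l n)%:R.
Proof.
pose stab (x : {set 'I_n} * {set 'I_n}) := #|('C_[set: 'S_n][x | pair_action])%g|.
transitivity ((\sum_x \sum_(a < 2) \sum_(d < 2)
    (if x \in venn_class n k l a d then stab x else 0))%N%:R : rat).
  rewrite pair_big_dep /= big_mkcond natr_sum; apply: eq_bigr => -[S S'] _ /=.
  rewrite twisted_sumE -astab1_pair !big_ord_recr !big_ord0 /= !inE /=.
  case: (#|S| == k); case: (#|S'| == l) => //=.
  by case: #|S :&: S'| => [|[|u]]; case: #|~: (S :|: S')| => [|[|v]];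
    rewrite /= ?add0n ?addn0.
rewrite exchange_big /=; under eq_bigr do rewrite exchange_big /=.
rewrite /class_count big_distrr /=; congr _%:R; apply: eq_bigr => a _.
rewrite big_distrr /=; apply: eq_bigr => d _.
by rewrite -big_mkcond sum_stab_venn_class; case: ifP; rewrite ?muln1 ?muln0.
Qed.

Lemma smoment_E2 n k l :
  smoment n (fun x => E k x * E l x) = (class_count k l n)%:R.
Proof.
rewrite /smoment sum_sign_E2 sum_twisted_sum natrM mulrA mulVf ?mul1r //.
by rewrite pnatr_eq0 -lt0n fact_gt0.
Qed.

Lemma fpsP (F G : fps) : (forall k l n, F k l n = G k l n) -> F = G.
Proof.
by move=> FG; do 3 apply: functional_extensionality => ?; apply: FG.
Qed.

Lemma fps_mulC F G : fps_mul F G = fps_mul G F.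
Proof.
apply: fpsP => k l n; rewrite /fps_mul (reindex_inj rev_ord_inj).
apply: eq_bigr => a _; rewrite (reindex_inj rev_ord_inj).
apply: eq_bigr => b _; rewrite (reindex_inj rev_ord_inj).
by apply: eq_bigr => c _ /=; rewrite mulrC !subSS !subKn // -ltnS.
Qed.

Lemma fps_mulDl F G H : fps_mul (fps_add F G) H = fps_add (fps_mul F H) (fps_mul G H).
Proof.
apply: fpsP => k l n; rewrite /fps_mul /fps_add -big_split; apply: eq_bigr => a _.
rewrite -big_split; apply: eq_bigr => b _.
by rewrite -big_split; apply: eq_bigr => c _; rewrite mulrDl.
Qed.

Lemma fps_mulBl F G H : fps_mul (fps_sub F G) H = fps_sub (fps_mul F H) (fps_mul G H).
Proof.
apply: fpsP => k l n; rewrite /fps_mul /fps_sub -sumrB; apply: eq_bigr => a _.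
rewrite -sumrB; apply: eq_bigr => b _.
by rewrite -sumrB; apply: eq_bigr => c _; rewrite mulrBl.
Qed.

Lemma fps_mulDr F G H : fps_mul H (fps_add F G) = fps_add (fps_mul H F) (fps_mul H G).
Proof. by rewrite fps_mulC fps_mulDl !(fps_mulC H). Qed.

Lemma fps_mulBr F G H : fps_mul H (fps_sub F G) = fps_sub (fps_mul H F) (fps_mul H G).
Proof. by rewrite fps_mulC fps_mulBl !(fps_mulC H). Qed.

Lemma sum_nat_delta K i (G : nat -> rat) :
  \sum_(0 <= a < K.+1) (a == i)%:R * G a = if (i <= K)%N then G i else 0.
Proof.
rewrite big_mkord; transitivity (\sum_(a < K.+1 | a == i :> nat) G a).
  by rewrite [RHS]big_mkcond; apply: eq_bigr => a _; case: eqP; rewrite ?mul1r ?mul0r.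
by rewrite big_ord1_eq.
Qed.

Lemma fps_mul_monol i j m F k l n :
  fps_mul (fps_mono i j m) F k l n =
  if [&& (i <= k)%N, (j <= l)%N & (m <= n)%N] then F (k - i)%N (l - j)%N (n - m)%N else 0.
Proof.
rewrite /fps_mul; transitivity (\sum_(0 <= a < k.+1) (a == i)%:R *
  \sum_(0 <= b < l.+1) (b == j)%:R *
  \sum_(0 <= c < n.+1) (c == m)%:R * F (k - a)%N (l - b)%N (n - c)%N).
  rewrite big_mkord; apply: eq_bigr => a _; rewrite big_mkord mulr_sumr.
  apply: eq_bigr => b _; rewrite big_mkord !mulr_sumr; apply: eq_bigr => c _.
  by rewrite /fps_mono !mulrA; do 3 case: eqP => _ /=; rewrite ?mul1r ?mul0r.
rewrite sum_nat_delta; case: leqP => //= _.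
by rewrite sum_nat_delta; case: leqP => //= _; rewrite sum_nat_delta.
Qed.

Lemma fps_mono_mul i j m i' j' m' :
  fps_mul (fps_mono i j m) (fps_mono i' j' m') = fps_mono (i + i') (j + j') (m + m').
Proof.
apply: fpsP => k l n; rewrite fps_mul_monol /fps_mono.
case: (leqP i k); case: (leqP j l); case: (leqP m n) => /= *;
  by repeat case: eqP => /= ?; try lia.
Qed.

Lemma if_boolE (b : bool) : (if b then 1 else 0) = b%:R :> rat.
Proof. by case: b. Qed.

Lemma if_and_boolE (b c : bool) : (if b then c%:R else 0) = (b && c)%:R :> rat.
Proof. by case: b. Qed.

(* 1 / ((1 - uz)(1 - vz)) = sum_(k, l) u^k v^l z^(k + l) *)
Definition fps_geom : fps := fun k l n => if n == (k + l)%N then 1 else 0.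

Lemma fps_geomK :
  fps_mul fps_geom (fps_mul (fps_sub fps_one (fps_mul fps_u fps_z))
                            (fps_sub fps_one (fps_mul fps_v fps_z))) = fps_one.
Proof.
rewrite fps_mulC /fps_one /fps_u /fps_v /fps_z !fps_mono_mul fps_mulBl !fps_mulBr.
rewrite !fps_mono_mul !fps_mulBl; apply: fpsP => k l n.
rewrite /fps_sub !fps_mul_monol /fps_geom /fps_mono /= !if_boolE !if_and_boolE.
case: k => [|k]; case: l => [|l]; case: n => [|[|n]];
  by rewrite /= ?(add0n, addn0, subn0, subSS, addSn, addnS, eqSS) ?subrr ?subr0.
Qed.

Lemma fps_mul_rhs_geom :
  fps_mul (fps_mul (fps_add fps_one fps_z)
                   (fps_add fps_one (fps_mul (fps_mul fps_u fps_v) fps_z))) fps_geom =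
  fun k l n => (class_count k l n)%:R.
Proof.
rewrite /fps_one /fps_u /fps_v /fps_z !fps_mono_mul fps_mulDl !fps_mulDr !fps_mono_mul.
rewrite !fps_mulDl; apply: fpsP => k l n.
rewrite /fps_add !fps_mul_monol /class_count /venn_admissible natr_sum.
rewrite !big_ord_recr !big_ord0 /= !add0r !natrD !add0r addrACA /fps_geom.
rewrite !if_boolE !if_and_boolE.
by congr ((nat_of_bool _)%:R + (nat_of_bool _)%:R +
          ((nat_of_bool _)%:R + (nat_of_bool _)%:R)); apply/idP/idP; lia.
Qed.

Theorem theorem3p2 :
  exists Q : fps,
    fps_mul Q (fps_mul (fps_sub fps_one (fps_mul fps_u fps_z))
                       (fps_sub fps_one (fps_mul fps_v fps_z))) = fps_one /\
    (fun k l n => smoment n (fun x => E k x * E l x)) =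
      fps_mul (fps_mul (fps_add fps_one fps_z)
                       (fps_add fps_one (fps_mul (fps_mul fps_u fps_v) fps_z))) Q.
Proof.
exists fps_geom; split; first exact: fps_geomK.
by rewrite fps_mul_rhs_geom; apply: fpsP => k l n; rewrite smoment_E2.
Qed.
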